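(* Let $k\ge1$ be an integer and $a,b,c\in\mathbb{C}$ such that $2c,\ 2c+2,\ \frac{a+b+1}{2},\ \frac{a+b+3}{2},\ \frac{a+b+5}{2}\notin\{0,-1,-2,\dots\}$, $2c+1\neq0$, and $\mathrm{Re}(2c-a-b-2k+1)>0$. Define $$G_k(a,b,c)={}_3F_2\!\left(\left.\begin{array}{c}a+k,\ b,\ c\\ \frac{a+b+1}{2},\ 2c\end{array}\right|1\right).$$ Then $$G_k(a,b,c)=G_{k-1}(a,b,c)+\frac{b}{a+b+1}\left[\frac{(a+k)(b+1)}{(2c+1)(a+b+3)}\,G_{k-1}(a+2,b+2,c+1)+G_{k-1}(a+1,b+1,c)\right].$$
   Context: ${}_3F_2(a_1,a_2,a_3;b_1,b_2;1)=\sum_{m\ge0}\frac{(a_1)_m(a_2)_m(a_3)_m}{m!\,(b_1)_m(b_2)_m}$ with $(\alpha)_m=\Gamma(\alpha+m)/\Gamma(\alpha)$, absolutely convergent when $\mathrm{Re}(b_1+b_2-a_1-a_2-a_3)>0$. Note $G_{k-1}(a+2,b+2,c+1)={}_3F_2(a+k+1,b+2,c+1;\frac{a+b+5}{2},2c+2;1)$ and $G_{k-1}(a+1,b+1,c)={}_3F_2(a+k,b+1,c;\frac{a+b+3}{2},2c;1)$. *)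

From Stdlib Require Import Reals Arith Factorial ClassicalEpsilon.
Open Scope R_scope.

Definition Cplx : Type := (R * R)%type.
Definition Cre (z : Cplx) : R := fst z.
Definition Cim (z : Cplx) : R := snd z.
Definition RtoC (x : R) : Cplx := (x, 0).
Definition Cadd (z w : Cplx) : Cplx := (fst z + fst w, snd z + snd w).
Definition Cneg (z : Cplx) : Cplx := (- fst z, - snd z).
Definition Csub (z w : Cplx) : Cplx := Cadd z (Cneg w).
Definition Cmul (z w : Cplx) : Cplx :=
  (fst z * fst w - snd z * snd w, fst z * snd w + snd z * fst w).
Definition Cinv (z : Cplx) : Cplx :=
  let d := fst z * fst z + snd z * snd z in (fst z / d, - snd z / d).
Definition Cdiv (z w : Cplx) : Cplx := Cmul z (Cinv w).

Fixpoint poch (x : Cplx) (m : nat) : Cplx :=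
  match m with
  | O => RtoC 1
  | S m' => Cmul (poch x m') (Cadd x (RtoC (INR m')))
  end.

Definition F32_term (a1 a2 a3 b1 b2 : Cplx) (m : nat) : Cplx :=
  Cdiv (Cmul (Cmul (poch a1 m) (poch a2 m)) (poch a3 m))
       (Cmul (Cmul (RtoC (INR (Factorial.fact m))) (poch b1 m)) (poch b2 m)).

Fixpoint Cpartial (u : nat -> Cplx) (n : nat) : Cplx :=
  match n with
  | O => u O
  | S n' => Cadd (Cpartial u n') (u n)
  end.

Definition Cseries_cv (u : nat -> Cplx) (l : Cplx) : Prop :=
  Un_cv (fun n => fst (Cpartial u n)) (fst l) /\
  Un_cv (fun n => snd (Cpartial u n)) (snd l).

(* value of 3F2 at 1: the sum of the series (chosen by epsilon; it is the
   genuine sum whenever the series converges). *)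
Definition F32 (a1 a2 a3 b1 b2 : Cplx) : Cplx :=
  epsilon (inhabits (RtoC 0)) (fun l => Cseries_cv (F32_term a1 a2 a3 b1 b2) l).

Definition notNonPosInt (z : Cplx) : Prop := forall n : nat, z <> RtoC (- INR n).

Definition G (k : nat) (a b c : Cplx) : Cplx :=
  F32 (Cadd a (RtoC (INR k))) b c
      (Cdiv (Cadd (Cadd a b) (RtoC 1)) (RtoC 2))
      (Cmul (RtoC 2) c).

(* Both sides are 3F2 series at 1 with positive parameter excess, hence absolutely convergent
   by Raabe's test, so it suffices to compare terms.  Raising the numerator parameter [a+k] by
   one changes the [(m+1)]-th term by a multiple of the [m]-th term of the series with all
   parameters raised by one; replacing [(c, 2c)] by [(c+1, 2c+1)] changes it by a multiple of
   the [m]-th term of the series with [a+k], [b], [(a+b+1)/2] raised by one and [(c+1, 2c+2)].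
   Chaining these two contiguous relations gives the recurrence. *)

From Stdlib Require Import Reals Lra Lia Factorial ClassicalEpsilon.
From Coquelicot Require Import Coquelicot.
From Pilot Require Import Defs.
Open Scope R_scope.

Lemma Cadd_Cplus : Cadd = Cplus. Proof. reflexivity. Qed.
Lemma Cmul_Cmult : Cmul = Cmult. Proof. reflexivity. Qed.
Lemma RtoC_Complex : Defs.RtoC = Complex.RtoC. Proof. reflexivity. Qed.

Lemma Cinv_Complex (z : C) : Defs.Cinv z = (/ z)%C.
Proof. unfold Defs.Cinv, Complex.Cinv; simpl; f_equal; f_equal; ring. Qed.

Lemma Cdiv_Complex (z w : C) : Defs.Cdiv z w = (z / w)%C.
Proof. unfold Defs.Cdiv; rewrite Cinv_Complex; reflexivity. Qed.

Ltac to_Complex :=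
  rewrite ?Cadd_Cplus, ?Cmul_Cmult, ?RtoC_Complex;
  repeat rewrite Cdiv_Complex.

(* [Cplx] and [C] are the same type, but [ring] and [field] only know [C]. *)
Ltac in_C := to_Complex; lazymatch goal with |- @eq _ ?u ?v => change (@eq C u v) end.

Lemma RtoC_neq0 (x : R) : x <> 0 -> Complex.RtoC x <> 0%C.
Proof. intros Hx E; apply Hx; exact (f_equal fst E). Qed.

Lemma notNonPosInt_add_nat (z : C) m : notNonPosInt z -> (z + INR m)%C <> 0%C.
Proof.
  intros Hz E; apply (Hz m).
  apply (f_equal fst) in E as E1; apply (f_equal snd) in E as E2; simpl in E1, E2.
  apply injective_projections; simpl; lra.
Qed.

Lemma notNonPosInt_neq0 (z : C) : notNonPosInt z -> z <> 0%C.
Proof.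
  intros Hz E; apply (notNonPosInt_add_nat z 0 Hz).
  rewrite E; apply injective_projections; simpl; ring.
Qed.

Lemma notNonPosInt_succ (z : C) : notNonPosInt z -> notNonPosInt (z + 1)%C.
Proof.
  intros Hz n E; apply (Hz (S n)); rewrite S_INR.
  apply (f_equal fst) in E as E1; apply (f_equal snd) in E as E2; simpl in E1, E2.
  apply injective_projections; simpl; lra.
Qed.

Lemma poch_succ (x : C) m : poch x (S m) = (poch x m * (x + INR m))%C.
Proof. reflexivity. Qed.

Lemma poch_succ_shift (x : C) m : poch x (S m) = (x * poch (x + 1) m)%C.
Proof.
  induction m as [|m IHm].
  - simpl; in_C; ring.
  - rewrite poch_succ, IHm, poch_succ, S_INR, RtoC_plus; in_C; ring.
Qed.

Lemma poch_neq0 (z : C) m : notNonPosInt z -> (poch z m : C) <> 0%C.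
Proof.
  intro Hz; induction m as [|m IHm].
  - exact C1_nz.
  - rewrite poch_succ; apply Cmult_neq_0; [exact IHm | exact (notNonPosInt_add_nat z m Hz)].
Qed.

Lemma INR_fact_succ m : INR (fact (S m)) = (INR m + 1) * INR (fact m).
Proof. rewrite fact_simpl, mult_INR, S_INR; reflexivity. Qed.

Lemma INR_fact_C_neq0 m : Complex.RtoC (INR (fact m)) <> 0%C.
Proof. exact (RtoC_neq0 _ (INR_fact_neq_0 m)). Qed.

Lemma INR_succ_C_neq0 m : (INR m + 1)%C <> 0%C.
Proof. rewrite <- RtoC_plus; apply RtoC_neq0; pose proof (pos_INR m); lra. Qed.

Lemma F32_termE (a1 a2 a3 b1 b2 : C) m : F32_term a1 a2 a3 b1 b2 m =
  (poch a1 m * poch a2 m * poch a3 m / (INR (fact m) * poch b1 m * poch b2 m))%C.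
Proof. unfold F32_term; to_Complex; reflexivity. Qed.

Lemma F32_term_succ (a1 a2 a3 b1 b2 : C) m :
  notNonPosInt b1 -> notNonPosInt b2 ->
  F32_term a1 a2 a3 b1 b2 (S m) = (F32_term a1 a2 a3 b1 b2 m *
    ((a1 + INR m) * (a2 + INR m) * (a3 + INR m) / ((INR m + 1) * (b1 + INR m) * (b2 + INR m))))%C.
Proof.
  intros Hb1 Hb2; rewrite !F32_termE, !poch_succ, INR_fact_succ, RtoC_mult, RtoC_plus.
  in_C; field.
  repeat split; auto using INR_fact_C_neq0, INR_succ_C_neq0, poch_neq0, notNonPosInt_add_nat.
Qed.

Lemma F32_term_contiguous_a (a b c d e : C) m :
  notNonPosInt d -> notNonPosInt e ->
  (F32_term (a + 1) b c d e (S m) = F32_term a b c d e (S m)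
    + b * c / (d * e) * F32_term (a + 1) (b + 1) (c + 1) (d + 1) (e + 1) m)%C.
Proof.
  intros Hd He.
  rewrite !F32_termE, (poch_succ (a + 1)), !(poch_succ_shift a), !(poch_succ_shift b),
    !(poch_succ_shift c), !(poch_succ_shift d), !(poch_succ_shift e), INR_fact_succ,
    RtoC_mult, RtoC_plus.
  in_C; field.
  repeat split; auto using INR_fact_C_neq0, INR_succ_C_neq0, poch_neq0, notNonPosInt_neq0, notNonPosInt_succ.
Qed.

Lemma F32_term_contiguous_c (a b c d : C) m :
  notNonPosInt d -> notNonPosInt (2 * c)%C ->
  (F32_term a b (c + 1) d (2 * c + 1) (S m) = F32_term a b c d (2 * c) (S m)
    + a * b / (2 * d * (2 * c + 1)) * F32_term (a + 1) (b + 1) (c + 1) (d + 1) (2 * (c + 1)) m)%C.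
Proof.
  intros Hd Hc.
  pose proof (notNonPosInt_succ _ Hc) as Hc1.
  assert (Hc0 : c <> 0%C) by (intro E; apply (notNonPosInt_neq0 _ Hc); rewrite E; in_C; ring).
  assert (E2 : (2 * (c + 1) = 2 * c + 1 + 1)%C) by (in_C; ring).
  assert (Hpoch : (poch (2 * c + 1) m * (2 * c + 1 + INR m) / (2 * c + 1) = poch (2 * c + 1 + 1) m)%C).
  { pose proof (poch_succ_shift (2 * c + 1)%C m) as H; rewrite poch_succ in H.
    rewrite H; in_C; field; exact (notNonPosInt_neq0 _ Hc1). }
  rewrite E2, !F32_termE, <- Hpoch, (poch_succ (c + 1)), (poch_succ (2 * c + 1)),
    !(poch_succ_shift a), !(poch_succ_shift b), !(poch_succ_shift c), !(poch_succ_shift d),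
    (poch_succ_shift (2 * c)), INR_fact_succ, RtoC_mult, RtoC_plus.
  in_C; field.
  repeat split; auto using INR_fact_C_neq0, INR_succ_C_neq0, poch_neq0, notNonPosInt_neq0,
    notNonPosInt_succ, notNonPosInt_add_nat.
Qed.

Lemma Cpartial_fst (u : nat -> Cplx) n : fst (Cpartial u n) = sum_f_R0 (fun k => fst (u k)) n.
Proof. induction n as [|n IHn]; simpl; [reflexivity | rewrite IHn; reflexivity]. Qed.

Lemma Cpartial_snd (u : nat -> Cplx) n : snd (Cpartial u n) = sum_f_R0 (fun k => snd (u k)) n.
Proof. induction n as [|n IHn]; simpl; [reflexivity | rewrite IHn; reflexivity]. Qed.

Lemma Cpartial_shift (x y v : nat -> Cplx) (k : C) :
  x 0%nat = y 0%nat -> (forall m, x (S m) = (y (S m) + k * v m)%C) ->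
  forall n, Cpartial x (S n) = (Cpartial y (S n) + k * Cpartial v n)%C.
Proof.
  intros H0 HS n; induction n as [|n IHn].
  - change (Cplus (x 0%nat) (x 1%nat) = Cplus (Cplus (y 0%nat) (y 1%nat)) (k * v 0%nat)%C).
    rewrite H0, HS; in_C; ring.
  - change (Cplus (Cpartial x (S n)) (x (S (S n)))
      = Cplus (Cplus (Cpartial y (S n)) (y (S (S n)))) (k * Cplus (Cpartial v n) (v (S n)))%C).
    rewrite IHn, HS; in_C; ring.
Qed.

Lemma Cseries_cv_shift (x y v : nat -> Cplx) (k Y V : C) :
  x 0%nat = y 0%nat -> (forall m, x (S m) = (y (S m) + k * v m)%C) ->
  Cseries_cv y Y -> Cseries_cv v V -> Cseries_cv x (Y + k * V)%C.
Proof.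
  intros H0 HS [Hy1 Hy2] [Hv1 Hv2].
  pose proof (Cpartial_shift x y v k H0 HS) as Hp.
  rewrite <- is_lim_seq_Reals in *.
  apply is_lim_seq_incr_1 in Hy1, Hy2.
  split; rewrite <- is_lim_seq_Reals; apply is_lim_seq_incr_1;
    eapply is_lim_seq_ext; try (intro n; rewrite Hp; reflexivity); simpl;
    apply is_lim_seq_plus'; try assumption.
  - apply is_lim_seq_minus'; apply (is_lim_seq_scal_l _ _ (Finite _)); assumption.
  - apply is_lim_seq_plus'; apply (is_lim_seq_scal_l _ _ (Finite _)); assumption.
Qed.

Lemma Cseries_cv_of_abs (u : nat -> Cplx) :
  ex_series (fun n => Cmod (u n)) -> exists l, Cseries_cv u l.
Proof.
  intro Hu.
  assert (Hfst : ex_series (fun n => fst (u n))).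
  { apply (ex_series_le (V := R_CompleteNormedModule) _ _
      (fun n => Rle_trans _ _ _ (Rmax_l _ _) (Rmax_Cmod (u n))) Hu). }
  assert (Hsnd : ex_series (fun n => snd (u n))).
  { apply (ex_series_le (V := R_CompleteNormedModule) _ _
      (fun n => Rle_trans _ _ _ (Rmax_r _ _) (Rmax_Cmod (u n))) Hu). }
  exists (Series (fun n => fst (u n)), Series (fun n => snd (u n))).
  apply Series_correct, is_series_Reals in Hfst, Hsnd.
  split; simpl.
  - apply (Un_cv_ext (sum_f_R0 (fun k => fst (u k)))); [|exact Hfst].
    intro n; symmetry; apply Cpartial_fst.
  - apply (Un_cv_ext (sum_f_R0 (fun k => snd (u k)))); [|exact Hsnd].
    intro n; symmetry; apply Cpartial_snd.
Qed.

Lemma F32_eq_of_cv (a1 a2 a3 b1 b2 l : C) :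
  Cseries_cv (F32_term a1 a2 a3 b1 b2) l -> F32 a1 a2 a3 b1 b2 = l.
Proof.
  intro Hl; unfold F32.
  destruct (epsilon_spec (inhabits (RtoC 0)) (fun l => Cseries_cv (F32_term a1 a2 a3 b1 b2) l)
    (ex_intro _ l Hl)) as [H1 H2].
  destruct Hl as [H3 H4].
  apply injective_projections; eapply UL_sequence; eassumption.
Qed.

(** * Convergence by Raabe's test *)

Lemma ex_series_raabe (v : nat -> R) (d : R) : 0 < d -> (forall n, 0 <= v n) ->
  eventually (fun n => INR n * v (S n) <= (INR n - 1 - d) * v n) -> ex_series v.
Proof.
  intros Hd Hv [M HM].
  set (w k := v (M + k)%nat).
  (* Summing the Raabe inequality from M to M + N telescopes. *)
  assert (Htel : forall N,
    d * sum_f_R0 w N + INR (M + N) * v (S (M + N)) <= (INR M - 1) * v M).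
  { induction N as [|N IHN].
    - simpl; unfold w; rewrite Nat.add_0_r; specialize (HM M (le_n _)); lra.
    - simpl sum_f_R0; unfold w at 2.
      specialize (HM (M + S N)%nat ltac:(lia)).
      rewrite <- plus_n_Sm in *; rewrite S_INR in *.
      pose proof (Hv (S (M + N))); lra. }
  assert (Hbound : forall N, sum_f_R0 w N <= (INR M - 1) * v M / d).
  { intro N; specialize (Htel N).
    assert (0 <= INR (M + N) * v (S (M + N))) by (apply Rmult_le_pos; [apply pos_INR | apply Hv]).
    apply Rle_div_r; lra. }
  destruct (growing_cv (sum_f_R0 w)) as [l Hl].
  - intro n; simpl; pose proof (Hv (M + S n)%nat); unfold w; lra.
  - exists ((INR M - 1) * v M / d); intros x [N ->]; apply Hbound.
  - apply (ex_series_incr_n v M); exists l; apply is_series_Reals; exact Hl.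
Qed.

Lemma pos_right_of_root (f : R -> R) (l : R) :
  f 0 = 0 -> 0 < l -> is_derive f 0 l -> exists e, 0 < e /\ forall x, 0 < x < e -> 0 < f x.
Proof.
  intros Hf0 Hl Hf; apply is_derive_Reals in Hf.
  destruct (Hf (l / 2) ltac:(lra)) as [e He].
  exists e; split; [apply cond_pos|].
  intros x [Hx Hxe].
  specialize (He x ltac:(lra) ltac:(rewrite Rabs_pos_eq; lra)).
  rewrite Rplus_0_l, Hf0 in He; apply Rabs_def2 in He.
  assert (0 < f x / x) by lra.
  replace (f x) with (f x / x * x) by (field; lra); nra.
Qed.

Definition Cmod2_one_plus (z : C) (x : R) : R := (1 + Re z * x) ^ 2 + (Im z * x) ^ 2.

(* The squared Raabe inequality for the term ratio of a 3F2 series, with [x = / n];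
   it vanishes at [0] with slope [2 (s - d)], [s] the parameter excess. *)
Definition raabe_poly (a1 a2 a3 b1 b2 : C) (d x : R) : R :=
  (1 - (1 + d) * x) ^ 2 * (1 + x) ^ 2 * Cmod2_one_plus b1 x * Cmod2_one_plus b2 x
  - Cmod2_one_plus a1 x * Cmod2_one_plus a2 x * Cmod2_one_plus a3 x.

Lemma is_derive_raabe_poly (a1 a2 a3 b1 b2 : C) (d : R) :
  is_derive (raabe_poly a1 a2 a3 b1 b2 d) 0 (2 * (Re (b1 + b2 - a1 - a2 - a3) - d)).
Proof. unfold raabe_poly, Cmod2_one_plus; auto_derive; [trivial | unfold Re, Im; simpl; ring]. Qed.

Lemma Cmod_add_R_sqr (z : C) (r : R) : Cmod (z + r) ^ 2 = (Re z + r) ^ 2 + Im z ^ 2.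
Proof.
  unfold Cmod; rewrite pow2_sqrt; [unfold Re, Im; simpl; ring |].
  apply Rplus_le_le_0_compat; apply pow2_ge_0.
Qed.

Lemma raabe_poly_inv (a1 a2 a3 b1 b2 : C) (d n : R) : 0 < n ->
  n ^ 8 * raabe_poly a1 a2 a3 b1 b2 d (/ n) =
  ((n - 1 - d) * ((n + 1) * Cmod (b1 + n) * Cmod (b2 + n))) ^ 2
  - (n * (Cmod (a1 + n) * Cmod (a2 + n) * Cmod (a3 + n))) ^ 2.
Proof.
  intro Hn; rewrite !Rpow_mult_distr, !Cmod_add_R_sqr.
  unfold raabe_poly, Cmod2_one_plus; field; lra.
Qed.

Lemma raabe_inequality (a1 a2 a3 b1 b2 : C) (d : R) : d < Re (b1 + b2 - a1 - a2 - a3) ->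
  eventually (fun n =>
    INR n * (Cmod (a1 + INR n) * Cmod (a2 + INR n) * Cmod (a3 + INR n))
    <= (INR n - 1 - d) * ((INR n + 1) * Cmod (b1 + INR n) * Cmod (b2 + INR n))).
Proof.
  intro Hd.
  assert (Hroot : raabe_poly a1 a2 a3 b1 b2 d 0 = 0) by (unfold raabe_poly, Cmod2_one_plus; ring).
  assert (Hslope : 0 < 2 * (Re (b1 + b2 - a1 - a2 - a3) - d)) by lra.
  destruct (pos_right_of_root _ _ Hroot Hslope (is_derive_raabe_poly a1 a2 a3 b1 b2 d))
    as [e [He Hpos]].
  destruct (INR_archimed 1 (Rmax (/ e) (1 + d))) as [N HN]; [lra|].
  exists N; intros n Hn.
  apply le_INR in Hn.
  pose proof (Rmax_l (/ e) (1 + d)); pose proof (Rmax_r (/ e) (1 + d)).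
  assert (Hinv : 0 < / e) by (apply Rinv_0_lt_compat; exact He).
  assert (Hn0 : 0 < INR n) by lra.
  assert (Hx : 0 < / INR n < e).
  { split; [apply Rinv_0_lt_compat; exact Hn0|].
    rewrite <- (Rinv_inv e); apply Rinv_lt_contravar; [apply Rmult_lt_0_compat|]; lra. }
  pose proof (raabe_poly_inv a1 a2 a3 b1 b2 d (INR n) Hn0) as Hinv_n.
  pose proof (Hpos _ Hx); pose proof (pow_lt _ 8 Hn0).
  assert (0 <= (INR n - 1 - d) * ((INR n + 1) * Cmod (b1 + INR n) * Cmod (b2 + INR n))).
  { pose proof (Cmod_ge_0 (b1 + INR n)); pose proof (Cmod_ge_0 (b2 + INR n)).
    apply Rmult_le_pos; [lra|]; apply Rmult_le_pos; [apply Rmult_le_pos|]; lra. }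
  nra.
Qed.

Lemma ex_series_Cmod_F32_term (a1 a2 a3 b1 b2 : C) :
  notNonPosInt b1 -> notNonPosInt b2 -> 0 < Re (b1 + b2 - a1 - a2 - a3) ->
  ex_series (fun n => Cmod (F32_term a1 a2 a3 b1 b2 n)).
Proof.
  intros Hb1 Hb2 Hs.
  set (d := Re (b1 + b2 - a1 - a2 - a3) / 2).
  apply (ex_series_raabe _ d); [unfold d; lra | intro; apply Cmod_ge_0 |].
  eapply filter_imp; [| apply (raabe_inequality a1 a2 a3 b1 b2 d); unfold d; lra].
  intros n Hn; cbv beta in Hn.
  set (T := Cmod (F32_term a1 a2 a3 b1 b2 n)).
  set (A := Cmod (a1 + INR n) * Cmod (a2 + INR n) * Cmod (a3 + INR n)) in Hn.
  set (B := (INR n + 1) * Cmod (b1 + INR n) * Cmod (b2 + INR n)) in Hn.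
  assert (HB : 0 < B).
  { pose proof (pos_INR n).
    apply Rmult_lt_0_compat; [apply Rmult_lt_0_compat; [lra|] |];
      apply Cmod_gt_0, notNonPosInt_add_nat; assumption. }
  assert (HT : Cmod (F32_term a1 a2 a3 b1 b2 (S n)) = T * (A / B)).
  { assert (Hden : ((INR n + 1) * (b1 + INR n) * (b2 + INR n))%C <> 0%C).
    { repeat apply Cmult_neq_0; auto using INR_succ_C_neq0, notNonPosInt_add_nat. }
    rewrite F32_term_succ, Cmod_mult, Cmod_div, !Cmod_mult by assumption.
    rewrite <- RtoC_plus, Cmod_R, Rabs_pos_eq by (pose proof (pos_INR n); lra).
    reflexivity. }
  rewrite HT; replace (INR n * (T * (A / B))) with (T * (INR n * A / B)) by (field; lra).
  rewrite (Rmult_comm _ T); apply Rmult_le_compat_l; [apply Cmod_ge_0 |].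
  apply Rle_div_l; assumption.
Qed.

Lemma Cseries_cv_F32 (a1 a2 a3 b1 b2 : C) :
  notNonPosInt b1 -> notNonPosInt b2 -> 0 < Re (b1 + b2 - a1 - a2 - a3) ->
  Cseries_cv (F32_term a1 a2 a3 b1 b2) (F32 a1 a2 a3 b1 b2).
Proof.
  intros Hb1 Hb2 Hs.
  destruct (Cseries_cv_of_abs _ (ex_series_Cmod_F32_term a1 a2 a3 b1 b2 Hb1 Hb2 Hs)) as [l Hl].
  rewrite (F32_eq_of_cv _ _ _ _ _ _ Hl); exact Hl.
Qed.

(** * Contiguous relations *)

Lemma F32_contiguous_a (a b c d e : C) :
  notNonPosInt d -> notNonPosInt e -> 0 < Re (d + e - a - b - c - 1) ->
  (F32 (a + 1) b c d e
   = F32 a b c d e + b * c / (d * e) * F32 (a + 1) (b + 1) (c + 1) (d + 1) (e + 1))%C.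
Proof.
  intros Hd He Hs; apply F32_eq_of_cv.
  apply (Cseries_cv_shift _ (F32_term a b c d e) (F32_term (a + 1) (b + 1) (c + 1) (d + 1) (e + 1))%C).
  - reflexivity.
  - intro m; apply F32_term_contiguous_a; assumption.
  - apply Cseries_cv_F32; [assumption | assumption | unfold Re in *; simpl in *; lra].
  - apply Cseries_cv_F32; [apply notNonPosInt_succ; assumption | apply notNonPosInt_succ; assumption |].
    unfold Re in *; simpl in *; lra.
Qed.

Lemma F32_contiguous_c (a b c d : C) :
  notNonPosInt d -> notNonPosInt (2 * c)%C -> 0 < Re (d + c - a - b) ->
  (F32 a b (c + 1) d (2 * c + 1)
   = F32 a b c d (2 * c)
     + a * b / (2 * d * (2 * c + 1)) * F32 (a + 1) (b + 1) (c + 1) (d + 1) (2 * (c + 1)))%C.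
Proof.
  intros Hd Hc Hs; apply F32_eq_of_cv.
  apply (Cseries_cv_shift _ (F32_term a b c d (2 * c))
    (F32_term (a + 1) (b + 1) (c + 1) (d + 1) (2 * (c + 1))))%C.
  - reflexivity.
  - intro m; apply F32_term_contiguous_c; assumption.
  - apply Cseries_cv_F32; [assumption | assumption | unfold Re in *; simpl in *; lra].
  - apply Cseries_cv_F32; [apply notNonPosInt_succ; assumption | |].
    + replace (2 * (c + 1))%C with (2 * c + 1 + 1)%C by (in_C; ring).
      do 2 apply notNonPosInt_succ; assumption.
    + unfold Re in *; simpl in *; lra.
Qed.

Lemma F32_recurrence (a b c d : C) :
  notNonPosInt d -> notNonPosInt (2 * c)%C -> 0 < Re (d + c - a - b - 1) ->
  (F32 (a + 1) b c d (2 * c)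
   = F32 a b c d (2 * c) + b / (2 * d) *
       ((a + 1) * (b + 1) / (2 * (d + 1) * (2 * c + 1))
          * F32 (a + 1 + 1) (b + 1 + 1) (c + 1) (d + 1 + 1) (2 * (c + 1))
        + F32 (a + 1) (b + 1) c (d + 1) (2 * c)))%C.
Proof.
  intros Hd Hc Hs.
  assert (Hc0 : c <> 0%C) by (intro E; apply (notNonPosInt_neq0 _ Hc); rewrite E; in_C; ring).
  rewrite F32_contiguous_a, F32_contiguous_c;
    try (apply notNonPosInt_succ; assumption); try assumption;
    try (unfold Re in *; simpl in *; lra).
  in_C; field; repeat split; auto using notNonPosInt_neq0, notNonPosInt_succ.
Qed.

Theorem mainTheorem12 (k : nat) (a b c : Cplx) :
  (1 <= k)%nat ->
  notNonPosInt (Cmul (RtoC 2) c) ->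
  notNonPosInt (Cadd (Cmul (RtoC 2) c) (RtoC 2)) ->
  notNonPosInt (Cdiv (Cadd (Cadd a b) (RtoC 1)) (RtoC 2)) ->
  notNonPosInt (Cdiv (Cadd (Cadd a b) (RtoC 3)) (RtoC 2)) ->
  notNonPosInt (Cdiv (Cadd (Cadd a b) (RtoC 5)) (RtoC 2)) ->
  Cadd (Cmul (RtoC 2) c) (RtoC 1) <> RtoC 0 ->
  Cre (Csub (Cmul (RtoC 2) c) (Cadd (Cadd a b) (RtoC (2 * INR k - 1)))) > 0 ->
  G k a b c =
  Cadd (G (k - 1) a b c)
    (Cmul (Cdiv b (Cadd (Cadd a b) (RtoC 1)))
       (Cadd
          (Cmul
             (Cdiv (Cmul (Cadd a (RtoC (INR k))) (Cadd b (RtoC 1)))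
                   (Cmul (Cadd (Cmul (RtoC 2) c) (RtoC 1))
                         (Cadd (Cadd a b) (RtoC 3))))
             (G (k - 1) (Cadd a (RtoC 2)) (Cadd b (RtoC 2)) (Cadd c (RtoC 1))))
          (G (k - 1) (Cadd a (RtoC 1)) (Cadd b (RtoC 1)) c))).
Proof.
  (* The four discarded hypotheses follow from [Hc] and [Hd]. *)
  intros Hk Hc _ Hd _ _ _ Hre.
  destruct k as [|k]; [lia|]; rewrite Nat.sub_succ, Nat.sub_0_r.
  unfold G; to_Complex; rewrite Cdiv_Complex in Hd; rewrite S_INR in Hre |- *.
  rewrite RtoC_plus, Cplus_assoc.
  set (d := ((a + b + 1) / 2)%C) in *.
  assert (E1 : (F32 (a + 1 + INR k) (b + 1) c ((a + 1 + (b + 1) + 1) / 2) (2 * c)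
             = F32 (a + INR k + 1) (b + 1) c (d + 1) (2 * c))%C) by (f_equal; unfold d; in_C; field).
  assert (E2 : (F32 (a + 2 + INR k) (b + 2) (c + 1) ((a + 2 + (b + 2) + 1) / 2) (2 * (c + 1))
             = F32 (a + INR k + 1 + 1) (b + 1 + 1) (c + 1) (d + 1 + 1) (2 * (c + 1)))%C)
    by (f_equal; unfold d; in_C; field).
  assert (Hs : 0 < Re (d + c - (a + INR k) - b - 1)).
  { unfold Cre, d, Re in *; simpl in *; field_simplify; lra. }
  assert (Hd' : notNonPosInt d) by exact Hd.
  rewrite E1, E2, F32_recurrence by assumption.
  replace (a + b + 1)%C with (2 * d)%C by (unfold d; in_C; field).
  replace (a + b + 3)%C with (2 * (d + 1))%C by (unfold d; in_C; field).
  clearbody d; in_C; field; repeat split; auto using notNonPosInt_neq0, notNonPosInt_succ.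
Qed.
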